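(* Let $\mathbf{C}$ be a covering of a finite nonempty set $U$ such that every $x\in U$ has a core block in $\mathbf{C}$. If $K\in\mathbf{C}$ is not a core block of any element of $U$, then $K$ is a reducible element of $\mathbf{C}$.
   Context: A covering of $U$ is a family (set) $\mathbf{C}$ of subsets of $U$ with $\emptyset\notin\mathbf{C}$ and $\bigcup\mathbf{C}=U$; its elements are called blocks. The membership repeat degree of $x\in U$ is $\partial(x)=|\{K\in\mathbf{C}: x\in K\}|$. The common block repeat degree of $(x,y)\in U\times U$ is $\lambda(x,y)=|\{K\in\mathbf{C}: \{x,y\}\subseteq K\}|$. A block $K\in\mathbf{C}$ is a core block of $x\in U$ if $x\in K$ and $\lambda(x,y)=\partial(x)$ for every $y\in K$. A block $K\in\mathbf{C}$ is a reducible element of $\mathbf{C}$ if $K$ is the union of some subfamily of $\mathbf{C}\setminus\{K\}$; otherwise it is irreducible. *)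

From mathcomp Require Import all_boot.
Set Implicit Arguments. Unset Strict Implicit. Unset Printing Implicit Defensive.

Definition is_covering (T : finType) (U : {set T}) (C : {set {set T}}) : Prop :=
  [/\ (forall K : {set T}, K \in C -> K \subset U), set0 \notin C & cover C = U].

Definition mrd (T : finType) (C : {set {set T}}) (x : T) : nat :=
  #|[set K in C | x \in K]|.

Definition cbrd (T : finType) (C : {set {set T}}) (x y : T) : nat :=
  #|[set K in C | (x \in K) && (y \in K)]|.

Definition core_block (T : finType) (C : {set {set T}}) (x : T) (K : {set T}) : Prop :=
  [/\ K \in C, x \in K & forall y, y \in K -> cbrd C x y = mrd C x].

Definition reducible (T : finType) (C : {set {set T}}) (K : {set T}) : Prop :=
  K \in C /\ exists F : {set {set T}}, F \subset C :\ K /\ cover F = K.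

From mathcomp Require Import all_boot.
Set Implicit Arguments. Unset Strict Implicit. Unset Printing Implicit Defensive.

(* If B is a core block of x, then every block K containing x
   also contains B: for y in B, the blocks containing both x and y are as
   many as the blocks containing x, hence they are the same blocks, so each
   block through x passes through y.  Now let K be a block which is a core
   block of no point.  Every x in K lies in U and has a core block B_x; by the
   above B_x is contained in K, and B_x <> K since K is not a core block of x.
   Hence K is the union of the blocks of C \ {K} that it contains, i.e. K is
   reducible. *)

Lemma cbrd_eq_mrdP (T : finType) (C : {set {set T}}) (x y : T) :
  cbrd C x y = mrd C x <-> (forall K, K \in C -> x \in K -> y \in K).
Proof.
rewrite /cbrd /mrd.
have sub_xy : [set K in C | (x \in K) && (y \in K)] \subset [set K in C | x \in K].
  by apply/subsetP=> K; rewrite !inE => /and3P[-> -> _].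
split=> [same_deg K KC xK | all_y].
- have [_] := subset_leqif_cards sub_xy.
  rewrite same_deg eqxx => /esym/eqP eq_sets.
  have : K \in [set K0 in C | x \in K0] by rewrite inE KC xK.
  by rewrite -eq_sets !inE => /and3P[].
- apply: eq_card => K; rewrite !inE.
  by case: (boolP (K \in C)) => //= KC; case: (boolP (x \in K)) => //= /(all_y K KC).
Qed.

Lemma core_block_sub (T : finType) (C : {set {set T}}) (x : T) (B K : {set T}) :
  core_block C x B -> K \in C -> x \in K -> B \subset K.
Proof.
case=> _ _ deg_eq KC xK; apply/subsetP=> y yB.
by have /cbrd_eq_mrdP := deg_eq y yB; apply.
Qed.

Lemma cover_subsets (T : finType) (F : {set {set T}}) (K : {set T}) :
  (forall x, x \in K -> exists2 B, B \in F & (x \in B) && (B \subset K)) ->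
  cover [set B in F | B \subset K] = K.
Proof.
move=> covered; apply/eqP; rewrite eqEsubset; apply/andP; split.
- by apply/bigcupsP=> B; rewrite inE => /andP[].
- apply/subsetP=> x /covered[B BF /andP[xB BK]].
  by apply/bigcupP; exists B; rewrite // inE BF BK.
Qed.

Theorem proposition18 (T : finType) (U : {set T}) (C : {set {set T}}) :
  U != set0 ->
  is_covering U C ->
  (forall x, x \in U -> exists K, core_block C x K) ->
  forall K, K \in C ->
  (forall x, x \in U -> ~ core_block C x K) ->
  reducible C K.
Proof.
move=> _ [blocks_sub _ _] has_core K KC not_core; split=> //.
exists [set B in C :\ K | B \subset K]; split.
  by apply/subsetP=> B; rewrite inE => /andP[].
apply: cover_subsets => x xK.
have xU : x \in U by apply: subsetP (blocks_sub K KC) x xK.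
have [B coreB] := has_core x xU.
have [BC xB _] := coreB.
have BK : B \subset K := core_block_sub coreB KC xK.
have BneK : B != K by apply/eqP=> eqBK; apply: (not_core x xU); rewrite -eqBK.
by exists B; rewrite ?inE ?BneK ?BC ?xB.
Qed.
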